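(* For every $\varepsilon>0$, the following algorithm is $(\varepsilon,0)$-differentially private. Given a graph $G=([n],E)$: set $d=10000/\varepsilon^2$; for each $v\in[n]$ let $\hat d(v)=d(v)+\mathrm{Lap}(3/\varepsilon)$ (independent noise) and let $\mathcal C=\{v:\hat d(v)>d\}$; let $G_1=(\mathcal C,E_1)$ with $E_1=\{\{u,v\}\in E: u,v\in\mathcal C\}$; sample a cut $S_1^A\in\{\pm1\}^{\mathcal C}$ of $G_1$ with $\Pr[S_1^A=\hat S]\propto\exp(\varepsilon\,\mathrm{val}_{G_1}(\hat S)/6)$; let $S_1^B$ be a uniformly random assignment in $\{\pm1\}^{[n]\setminus\mathcal C}$ and $S_1$ the concatenation of $S_1^A$ and $S_1^B$; let $S_2$ be the output of the algorithm $\mathcal A_{\varepsilon/3}$ on $G$; output $S_1$ with probability $1/2$ and $S_2$ with probability $1/2$. Here $\mathcal A_{\varepsilon'}$ is: set $\varepsilon_0=\varepsilon'/2$, choose independent uniform $c_1(v),c_2(v)\in\{\pm1\}$ for all $v$, let $\ell(v)=|\{u:\{u,v\}\in E,c_1(u)=c_1(v)\}|$, sample independent $\zeta_v\sim\mathrm{DLap}(1/\varepsilon_0)$, set $c(v)=c_1(v)$ if $\ell(v)-\lceil\frac{d(v)-1}2\rceil+\zeta_v\le0$ and $c(v)=c_2(v)$ otherwise, and output $c$ (equivalently $\{v:c(v)=+1\}$).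
   Context: $G$ is a simple undirected graph; $d(v)$ is its degree. A cut is an assignment in $\{\pm1\}^V$ (equivalently a vertex subset), and $\mathrm{val}_H(\hat S)$ is the number of edges of $H$ whose endpoints receive different values. $\mathrm{Lap}(b)$ has density $\frac1{2b}e^{-|x|/b}$; $\mathrm{DLap}(1/\varepsilon_0)$ has mass $\frac{e^{\varepsilon_0}-1}{e^{\varepsilon_0}+1}e^{-\varepsilon_0|x|}$ at $x\in\mathbb Z$. Neighboring graphs on $[n]$ differ by one edge; $(\varepsilon,0)$-DP means $\Pr[\mathcal M(G)\in T]\le e^\varepsilon\Pr[\mathcal M(G')\in T]$ for neighbors and all output sets $T$. *)

From HB Require Import structures.
From mathcomp Require Import all_boot all_order all_algebra.
From mathcomp Require Import all_classical all_reals all_analysis.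
Set Implicit Arguments. Unset Strict Implicit. Unset Printing Implicit Defensive.
Import Order.TTheory GRing.Theory Num.Theory.
Import numFieldNormedType.Exports.

Local Open Scope ring_scope.

(* A simple undirected graph on vertex set 'I_n is given by its edge set:
   a set of 2-element subsets of 'I_n. *)
Definition graph (n : nat) := {set {set 'I_n}}.

Definition simple_graph n (E : graph n) : Prop :=
  forall e, e \in E -> #|e| = 2%N.

Definition neighboring n (E E' : graph n) : Prop :=
  exists e : {set 'I_n}, #|e| = 2%N /\ (E :\: E') :|: (E' :\: E) = [set e].

Definition deg n (E : graph n) (v : 'I_n) : nat := #|[set e in E | v \in e]|.

(* A cut is an assignment in {+1,-1}^V, encoded as a boolean function
   (true = +1, false = -1). *)
Definition cut n := {ffun 'I_n -> bool}.

Definition cutval n (E : graph n) (s : cut n) : nat :=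
  #|[set e in E | [exists u in e, exists w in e, s u != s w]]|.

Definition induced n (E : graph n) (C : {set 'I_n}) : graph n :=
  [set e in E | e \subset C].

Section Noise.
Variable R : realType.

Definition lap_pdf (b x : R) : R := (2 * b)^-1 * expR (- `|x| / b).

Definition lap_tail (b t : R) : R :=
  (\int[@lebesgue_measure R]_(x in `]t, +oo[%classic) lap_pdf b x)%R.

(* mass of DLap(1/eps0) at x in Z *)
Definition dlap_pmf (eps0 : R) (x : int) : R :=
  (expR eps0 - 1) / (expR eps0 + 1) * expR (- eps0 * `|x%:~R|).

Definition dlap_cdf (eps0 : R) (k : int) : R :=
  fine (\sum_(j <oo) (dlap_pmf eps0 (k - j%:Z))%:E)%E.
End Noise.

(* ---------- The algorithms, as output distributions (pmfs on cuts) ---------- *)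
Section Algorithms.
Variables (R : realType) (n : nat).

(* Algorithm A_{eps'}: Pr[ A_{eps'}(G) outputs c = s ].
   c1, c2 uniform in {+-1}^n (prob 2^-n each), zeta_v independent;
   given c1, c2, vertex v independently takes c1(v) with probability
   Pr[ l(v) - ceil((d(v)-1)/2) + zeta_v <= 0 ] = Pr[zeta_v <= ceil((d(v)-1)/2) - l(v)]
   and c2(v) otherwise. *)
Definition ell (E : graph n) (c1 : cut n) (v : 'I_n) : nat :=
  #|[set u | ([set u; v] \in E) && (c1 u == c1 v)]|.

Definition keep_prob (eps' : R) (E : graph n) (c1 : cut n) (v : 'I_n) : R :=
  dlap_cdf (eps' / 2)
    (Num.ceil (((deg E v)%:R - 1) / 2 : R) - (ell E c1 v)%:Z).

Definition algA_pmf (eps' : R) (E : graph n) (s : cut n) : R :=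
  \sum_(c1 : cut n) \sum_(c2 : cut n)
    ((2 ^+ n)^-1 * (2 ^+ n)^-1 *
     \prod_(v : 'I_n)
       (keep_prob eps' E c1 v * (c1 v == s v)%:R
        + (1 - keep_prob eps' E c1 v) * (c2 v == s v)%:R)).

Definition thr (eps : R) : R := 10000 / eps ^+ 2.

(* Pr[ d(v) + Lap(3/eps) > d ] *)
Definition in_prob (eps : R) (E : graph n) (v : 'I_n) : R :=
  lap_tail (3 / eps) (thr eps - (deg E v)%:R).

(* Pr[ calC = C ] (independent noise per vertex) *)
Definition setC_prob (eps : R) (E : graph n) (C : {set 'I_n}) : R :=
  \prod_(v : 'I_n) (if v \in C then in_prob eps E v else 1 - in_prob eps E v).

Definition em_weight (eps : R) (E : graph n) (C : {set 'I_n}) (s : cut n) : R :=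
  expR (eps * (cutval (induced E C) s)%:R / 6).

(* Assignments in {+-1}^C are encoded as cuts that are -1 (false) outside C. *)
Definition em_norm (eps : R) (E : graph n) (C : {set 'I_n}) : R :=
  \sum_(t : cut n | [forall v, (v \notin C) ==> ~~ t v]) em_weight eps E C t.

(* Pr[ S_1 = s | calC = C ]: exponential mechanism on C, uniform outside C *)
Definition S1_cond_pmf (eps : R) (E : graph n) (C : {set 'I_n}) (s : cut n) : R :=
  em_weight eps E C s / em_norm eps E C * (2 ^+ #|~: C|)^-1.

Definition alg_pmf (eps : R) (E : graph n) (s : cut n) : R :=
  2^-1 * (\sum_(C : {set 'I_n}) setC_prob eps E C * S1_cond_pmf eps E C s)
  + 2^-1 * algA_pmf (eps / 3) E s.

Definition alg_prob (eps : R) (E : graph n) (T : {set cut n}) : R :=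
  \sum_(s in T) alg_pmf eps E s.

Definition edge_DP (eps : R) (M : graph n -> {set cut n} -> R) : Prop :=
  forall E E' : graph n, simple_graph E -> simple_graph E' -> neighboring E E' ->
  forall T : {set cut n}, M E T <= expR eps * M E' T.
End Algorithms.

From Pilot Require
Import Defs.
From HB Require Import structures.
From mathcomp Require Import all_boot all_order all_algebra.
From mathcomp Require Import all_classical all_reals all_analysis.
From mathcomp Require Import measurable_realfun ring lra zify.
Import Order.TTheory GRing.Theory Num.Theory.
Import numFieldNormedType.Exports.
Import Defs.
Local Open Scope ring_scope.

Set Implicit Arguments.
Unset Strict Implicit.
Unset Printing Implicit Defensive.

(* The output distribution is an even mixture of two branches, so it suffices
   to show that, for every output cut s, each branch gives s probability at
   most e^eps times its probability on a graph differing in one edge e.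
   Adding e changes d(v) and l(v) by at most one, and only at the two
   endpoints of e, and changes every cut value by at most one.
   In the first branch, Pr[d(v) + Lap(3/eps) > d] and its complement move by a
   factor at most e^(eps/3) at each endpoint of e, giving e^(2 eps/3) for the
   law of calC, while the exponential-mechanism weight and its normaliser each
   move by at most e^(eps/6), giving e^(eps/3) for S_1 given calC.
   In A_eps', vertex v keeps c_1(v) with probability Pr[DLap(2/eps') <= k(v)]
   for an integer threshold k(v) that moves by at most one; since the discrete
   Laplace mass satisfies p(x + 1) <= e^(eps'/2) p(x), this probability and its
   complement move by at most e^(eps'/2) at each endpoint of e, so A_eps' is
   eps'-DP; here eps' = eps/3. The Laplace tail is handled through its closed
   form. *)

Lemma ler_prod_except (R : numDomainType) (I : finType) (A : {set I})
    (F G : I -> R) (K : R) :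
  (forall i, 0 <= F i) -> (forall i, i \notin A -> F i <= G i) ->
  (forall i, i \in A -> F i <= K * G i) ->
  \prod_i F i <= K ^+ #|A| * \prod_i G i.
Proof.
move=> F_ge0 F_le_off F_le_on.
have -> : K ^+ #|A| * \prod_i G i = \prod_i ((if i \in A then K else 1) * G i).
  by rewrite big_split /= -prodr_const big_mkcond.
apply: ler_prod => i _; rewrite F_ge0 /=; case: ifPn => iA; first exact: F_le_on.
by rewrite mul1r F_le_off.
Qed.

Lemma ler_mixture (R : numDomainType) (p p' K x y : R) : 0 <= x -> 0 <= y ->
  p <= K * p' -> 1 - p <= K * (1 - p') ->
  p * x + (1 - p) * y <= K * (p' * x + (1 - p') * y).
Proof.
by move=> x_ge0 y_ge0 p_le q_le; rewrite mulrDr !mulrA lerD // ler_wpM2r.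
Qed.

Lemma ler_ratio (R : numFieldType) (w w' N N' K : R) :
  0 < N -> 0 < N' -> 0 <= w' -> 0 < K -> w <= K * w' -> N' <= K * N ->
  w / N <= K ^+ 2 * (w' / N').
Proof.
move=> N_gt0 N'_gt0 w'_ge0 K_gt0 w_le N'_le.
rewrite ler_pdivrMr // (le_trans w_le) //.
have -> : K ^+ 2 * (w' / N') * N = K * w' * (K * N / N') by field; rewrite gt_eqF.
have ratio_ge1 : 1 <= K * N / N' by rewrite ler_pdivlMr // mul1r.
by rewrite ler_peMr // mulr_ge0 // ltW.
Qed.

Lemma ceil_between (R : archiRealDomainType) (x y : R) : x <= y -> y <= x + 1 ->
  Num.ceil x <= Num.ceil y <= Num.ceil x + 1.
Proof.
move=> xy yx1; rewrite le_ceil //= -(ceil1 R) -ceilDrz //.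
exact: le_ceil.
Qed.

Section Laplace.
Variables (R : realType) (b : R).
Hypothesis b_gt0 : 0 < b.
Notation mu := (@lebesgue_measure R).

Lemma is_derive_expRM (c x : R) :
  is_derive x 1 (fun y => expR (c * y)) (expR (c * x) * c).
Proof.
have h : is_derive x 1 (fun y : R => c * y) c.
  have := @is_deriveZ R R^o R^o id c x 1 1 (is_derive_id _ _).
  by rewrite /GRing.scale /= mulr1.
exact: (@is_derive1_comp R expR (fun y => c * y) x (expR (c * x)) c).
Qed.

Lemma continuous_expRM (c : R) : continuous (fun y : R => expR (c * y)).
Proof.
move=> x; apply: differentiable_continuous; apply/derivable1_diffP.
by have [] := is_derive_expRM c x.
Qed.

Lemma continuous_lap_pdf : continuous (lap_pdf b).
Proof.
move=> x; apply: (@continuousM _ R^o (fun=> _) (fun x => expR (- `|x| / b))).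
  exact: cst_continuous.
apply: (@continuous_comp _ _ _ (fun x : R => - `|x| / b) expR); last exact: continuous_expR.
apply: (@continuousM _ R^o (fun x : R => - `|x|) (fun=> b^-1)); last exact: cst_continuous.
exact: (@continuousN _ R^o _ (fun x : R => `|x|) x (@norm_continuous _ R^o x)).
Qed.

Lemma measurable_lap_pdf (D : set R) : measurable D ->
  measurable_fun D (EFin \o lap_pdf b).
Proof.
move=> mD; apply/measurable_EFinP; apply: measurable_funTS.
exact: continuous_measurable_fun continuous_lap_pdf.
Qed.

Lemma lap_pdf_ge0 x : 0 <= lap_pdf b x.
Proof. by rewrite /lap_pdf mulr_ge0 ?expR_ge0 // invr_ge0 mulr_ge0 // ltW. Qed.

Definition lap_tail_closed (t : R) : R :=
  if 0 <= t then 2^-1 * expR (- b^-1 * t) else 1 - 2^-1 * expR (b^-1 * t).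

Lemma lap_integral_ge0 (t : R) : 0 <= t ->
  (\int[mu]_(x in `]t, +oo[) (lap_pdf b x)%:E = (lap_tail_closed t)%:E)%E.
Proof.
move=> t_ge0; rewrite /lap_tail_closed t_ge0.
have primitive_derive (x : R) : 0 < x ->
    is_derive x 1 (fun x => - (2^-1 * expR (- b^-1 * x))) (lap_pdf b x).
  move=> x_gt0; have -> : lap_pdf b x = - (2^-1 * (expR (- b^-1 * x) * - b^-1)).
    rewrite /lap_pdf gtr0_norm // (_ : - x / b = - b^-1 * x); last by ring.
    by field; rewrite gt_eqF.
  exact/is_deriveN/is_deriveZ/is_derive_expRM.
rewrite integral_itv_obnd_cbnd; last exact: measurable_lap_pdf.
rewrite (@ge0_continuous_FTC2y R (lap_pdf b) (fun x => - (2^-1 * expR (- b^-1 * x))) t 0).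
- by rewrite -EFinB sub0r opprK.
- by move=> x _; exact: lap_pdf_ge0.
- exact: continuous_subspaceT continuous_lap_pdf.
- rewrite -oppr0; apply: cvgN; rewrite -(mulr0 (2^-1 : R)); apply: cvgMl_tmp.
  rewrite (_ : (fun x => expR (- b^-1 * x)) =
               (fun z => expR (- z)) \o (fun z => b^-1 * z)); last first.
    by apply: funext => x; rewrite /= mulNr.
  apply: (@cvg_comp _ _ _ _ _ _ (pinfty_nbhs R)); last exact: cvgr_expR.
  by apply: gt0_cvgMry; rewrite ?invr_gt0 //; exact: cvg_id.
- by move=> x tx; have [] := primitive_derive x (le_lt_trans t_ge0 tx).
- apply: cvg_at_right_filter; apply: cvgN; apply: cvgMl_tmp.
  exact: continuous_expRM.
- move=> x; rewrite in_itv /= andbT => tx.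
  have := primitive_derive x (le_lt_trans t_ge0 tx) => x_derive.
  by rewrite derive1E derive_val.
Qed.

Lemma lap_integral_lt0 (t : R) : t < 0 ->
  (\int[mu]_(x in `]t, +oo[) (lap_pdf b x)%:E = (lap_tail_closed t)%:E)%E.
Proof.
move=> t_lt0; rewrite /lap_tail_closed leNgt t_lt0 /=.
have primitive_derive (x : R) : x < 0 ->
    is_derive x 1 (fun x => 2^-1 * expR (b^-1 * x)) (lap_pdf b x).
  move=> x_lt0; have -> : lap_pdf b x = 2^-1 * (expR (b^-1 * x) * b^-1).
    rewrite /lap_pdf ltr0_norm // opprK (_ : x / b = b^-1 * x); last by ring.
    by field; rewrite gt_eqF.
  exact/is_deriveZ/is_derive_expRM.
rewrite (@itv_bndbnd_setU _ _ _ (BRight 0)) ?bnd_simp ?ltW //.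
rewrite ge0_integral_setU //=; last 3 first.
- by apply: measurable_lap_pdf; exact: measurableU.
- by move=> x _; rewrite lee_fin lap_pdf_ge0.
- apply/disj_set2P; apply/seteqP; split => x //=.
  rewrite !in_itv /= andbT => -[/andP[_ x_le0] x_gt0].
  by have := le_lt_trans x_le0 x_gt0; rewrite ltxx.
rewrite lap_integral_ge0 // /lap_tail_closed lexx mulr0 expR0 mulr1.
rewrite integral_itv_obnd_cbnd; last exact: measurable_lap_pdf.
rewrite (@continuous_FTC2 R (lap_pdf b) (fun x => 2^-1 * expR (b^-1 * x)) t 0) //.
- by rewrite mulr0 expR0 mulr1 -!EFinD; congr (_%:E); lra.
- exact: continuous_subspaceT continuous_lap_pdf.
- split.
  + by move=> x; rewrite in_itv /= => /andP[_ x_lt0]; have [] := primitive_derive x x_lt0.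
  + by apply: cvg_at_right_filter; apply: cvgMl_tmp; exact: continuous_expRM.
  + by apply: cvg_at_left_filter; apply: cvgMl_tmp; exact: continuous_expRM.
- move=> x; rewrite in_itv /= => /andP[_ x_lt0].
  have := primitive_derive x x_lt0 => x_derive.
  by rewrite derive1E derive_val.
Qed.

Lemma lap_tailE (t : R) : lap_tail b t = lap_tail_closed t.
Proof.
rewrite /lap_tail /Rintegral.
by case: (leP 0 t) => t0; [rewrite lap_integral_ge0 | rewrite lap_integral_lt0].
Qed.

Lemma lap_tail_ge0 (t : R) : 0 <= lap_tail b t.
Proof.
rewrite lap_tailE /lap_tail_closed; case: ifPn => t_ge0.
  by rewrite mulr_ge0 ?expR_ge0.
have : expR (b^-1 * t) < 1 by rewrite expR_lt1 pmulr_rlt0 ?invr_gt0 // ltNge.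
have := expR_ge0 (b^-1 * t); lra.
Qed.

Lemma lap_tail_compl (t : R) : 1 - lap_tail b t = lap_tail b (- t).
Proof.
rewrite !lap_tailE /lap_tail_closed oppr_ge0; case: (ltgtP t 0) => [t_lt0|t_gt0|->].
- by rewrite mulNr mulrN opprK; lra.
- by rewrite mulrN mulNr.
- by rewrite oppr0 !mulr0 expR0; lra.
Qed.

Lemma lap_tail_nonincreasing : {homo lap_tail b : t t' /~ t <= t'}.
Proof.
have a_gt0 : 0 < b^-1 by rewrite invr_gt0.
move=> t' t tt'; rewrite !lap_tailE /lap_tail_closed; case: (leP 0 t) => t_ge0.
  by rewrite (le_trans t_ge0 tt') ler_pM2l // ler_expR !mulNr lerN2 ler_pM2l.
have : expR (b^-1 * t) < 1 by rewrite expR_lt1 pmulr_rlt0.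
case: (leP 0 t') => t'_ge0.
  have : expR (- b^-1 * t') <= 1 by rewrite expR_le1 mulNr oppr_le0 mulr_ge0 // ltW.
  lra.
have : expR (b^-1 * t) <= expR (b^-1 * t') by rewrite ler_expR ler_pM2l.
lra.
Qed.

Lemma lap_tail_le_shift (t : R) : lap_tail b t <= expR b^-1 * lap_tail b (t + 1).
Proof.
have a_gt0 : 0 < b^-1 by rewrite invr_gt0.
set K := expR b^-1; have K_ge1 : 1 <= K by rewrite -expR0 ler_expR ltW.
rewrite !lap_tailE /lap_tail_closed; case: (leP 0 t) => t_ge0.
  rewrite ifT; last by lra.
  by rewrite mulrCA /K -expRD (_ : b^-1 + _ = - b^-1 * t) //; ring.
set x := expR (b^-1 * t); have x_gt0 : 0 < x by exact: expR_gt0.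
have xKE : x * K = expR (b^-1 * (t + 1)) by rewrite -expRD mulrDr mulr1.
case: (leP 0 (t + 1)) => t1_ge0; last first.
  have xK_lt1 : x * K < 1 by rewrite xKE expR_lt1 pmulr_rlt0.
  have : 0 <= (K - 1) * (2 - x * K - x) by rewrite mulr_ge0 // subr_ge0; nra.
  rewrite -xKE; nra.
have -> : expR (- b^-1 * (t + 1)) = (x * K)^-1 by rewrite xKE -expRN mulNr.
have K_gt0 : 0 < K by exact: expR_gt0.
have -> : K * (2^-1 * (x * K)^-1) = (1 - 2^-1 * x) + (x - 1) ^+ 2 / (2 * x).
  by field; rewrite !gt_eqF.
by rewrite lerDl divr_ge0 ?sqr_ge0 // mulr_ge0 // ltW.
Qed.

Lemma lap_tail_ratio (t t' : R) : `|t - t'| <= 1 ->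
  lap_tail b t <= expR b^-1 * lap_tail b t'.
Proof.
have K_ge1 : 1 <= expR b^-1 by rewrite -expR0 ler_expR ltW // invr_gt0.
move=> tt'; case: (leP t' t) => [t'_le_t|t_lt_t'].
  by rewrite (le_trans (lap_tail_nonincreasing t'_le_t)) // ler_peMl // lap_tail_ge0.
rewrite (le_trans (lap_tail_le_shift t)) // ler_pM2l ?expR_gt0 //.
by apply: lap_tail_nonincreasing; move: tt'; rewrite ler_norml; lra.
Qed.

Lemma lap_tail_compl_ratio (t t' : R) : `|t - t'| <= 1 ->
  1 - lap_tail b t <= expR b^-1 * (1 - lap_tail b t').
Proof. by move=> tt'; rewrite !lap_tail_compl lap_tail_ratio // opprK addrC distrC. Qed.
End Laplace.

Section DiscreteLaplace.
Variables (R : realType) (e0 : R).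
Hypothesis e0_gt0 : 0 < e0.

Definition dlap_cdf_closed (k : int) : R :=
  if 0 <= k then 1 - expR (- e0 * (k%:~R + 1)) / (1 + expR (- e0))
  else expR (e0 * k%:~R) / (1 + expR (- e0)).

Let expRN_lt1 : expR (- e0) < 1. Proof. by rewrite expR_lt1 oppr_lt0. Qed.

Let dlap_coef_ge0 : 0 <= (expR e0 - 1) / (expR e0 + 1).
Proof. by rewrite divr_ge0 // ?subr_ge0 -?expR0 ?ler_expR ?ltW // addr_ge0 ?expR_ge0. Qed.

Lemma dlap_pmf_ge0 x : 0 <= dlap_pmf e0 x.
Proof. by rewrite /dlap_pmf mulr_ge0 ?expR_ge0. Qed.

Lemma dlap_coefE : (expR e0 - 1) / (expR e0 + 1) = (1 - expR (- e0)) / (1 + expR (- e0)).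
Proof.
have e0_neq0 : expR e0 != 0 by rewrite gt_eqF ?expR_gt0.
have e1_neq0 : expR e0 + 1 != 0 by rewrite gt_eqF // addr_gt0 ?expR_gt0.
have e2_neq0 : 1 + (expR e0)^-1 != 0 by rewrite gt_eqF // addr_gt0 ?invr_gt0 ?expR_gt0.
by rewrite expRN; field; rewrite e0_neq0 e1_neq0.
Qed.

Lemma dlap_pmfS_le x : dlap_pmf e0 (x + 1) <= expR e0 * dlap_pmf e0 x.
Proof.
rewrite /dlap_pmf mulrCA ler_wpM2l //.
rewrite -expRD ler_expR intrD.
have : `|x%:~R| <= `|x%:~R + 1| + `|- 1 : R|.
  by rewrite -[X in `|X| <= _](addrK 1) ler_normD.
rewrite normrN normr1.
move: (`|_|) (`|_|) => a b ab.
have := ler_wpM2l (ltW e0_gt0) ab; lra.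
Qed.

Local Notation dlap_series k := (\sum_(j <oo) (dlap_pmf e0 (k - j%:Z))%:E)%E.

Lemma dlap_series_neg (k : int) : k < 0 -> dlap_series k = (dlap_cdf_closed k)%:E.
Proof.
move=> k_lt0; rewrite /dlap_cdf_closed leNgt k_lt0 /=.
set a := (expR e0 - 1) / (expR e0 + 1) * expR (e0 * k%:~R).
have geoE j : dlap_pmf e0 (k - j%:Z) = geometric a (expR (- e0)) j.
  rewrite /dlap_pmf /geometric /a -[RHS]mulrA; congr (_ * _).
  rewrite ltr0_norm; last by rewrite ltrz0; lia.
  by rewrite -expRM_natr -expRD intrB; congr expR; ring.
rewrite (eq_eseriesr (fun j _ => congr1 EFin (geoE j))).
apply/cvg_lim => //.
have -> : (fun m => (\sum_(0 <= i < m) (geometric a (expR (- e0)) i)%:E)%E)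
   = EFin \o series (geometric a (expR (- e0))).
  by apply: funext => m; rewrite /= /series /= sumEFin.
apply: cvg_EFin; first exact: nearW.
have -> : expR (e0 * k%:~R) / (1 + expR (- e0)) = a / (1 - expR (- e0)).
  rewrite /a dlap_coefE.
  by field; apply/andP; split; rewrite gt_eqF // ?subr_gt0 // addr_gt0.
by apply: cvg_geometric_series; rewrite ger0_norm // ltW.
Qed.

Lemma dlap_series_recl (k : int) :
  dlap_series k = ((dlap_pmf e0 k)%:E + dlap_series (k - 1))%E.
Proof.
rewrite nneseries_recl //; last by move=> j _; rewrite lee_fin dlap_pmf_ge0.
rewrite subr0; congr (_ + _)%E.
rewrite -nneseries_addn; last by move=> j; rewrite lee_fin dlap_pmf_ge0.
apply: eq_eseriesr => j _; congr (_%:E); congr dlap_pmf.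
by rewrite addn1 -addn1 PoszD; ring.
Qed.

Lemma dlap_cdf_closed_recl (k : int) : 0 <= k ->
  dlap_cdf_closed k = dlap_pmf e0 k + dlap_cdf_closed (k - 1).
Proof.
move=> k_ge0; have r2_neq0 : 1 + expR (- e0) != 0 by rewrite gt_eqF // addr_gt0.
rewrite /dlap_cdf_closed /dlap_pmf dlap_coefE k_ge0 ger0_norm ?ler0z //.
case: (ltP 0 k) => [k_gt0 | k_le0].
  rewrite ifT; last by lia.
  have -> : expR (- e0 * k%:~R) = expR (- e0 * ((k - 1)%:~R + 1)).
    by congr expR; rewrite intrB subrK.
  have -> : expR (- e0 * (k%:~R + 1)) = expR (- e0 * ((k - 1)%:~R + 1)) * expR (- e0).
    by rewrite -expRD; congr expR; rewrite intrB; ring.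
  by field.
have -> : k = 0 by lia.
rewrite /= mulr0 expR0 mulr1 add0r mulrN1 mulr1.
by field.
Qed.

Lemma dlap_series_closed (k : int) : dlap_series k = (dlap_cdf_closed k)%:E.
Proof.
case: (ltP k 0) => [|k_ge0]; first exact: dlap_series_neg.
have [m ->] : exists m : nat, k = m%:Z by exists `|k|%N; rewrite gez0_abs.
elim: m => [|m IH].
  by rewrite dlap_series_recl dlap_series_neg // (@dlap_cdf_closed_recl 0).
rewrite dlap_series_recl (_ : m.+1%:Z - 1 = m%:Z); last by rewrite -addn1 PoszD addrK.
by rewrite IH -EFinD (@dlap_cdf_closed_recl m.+1) // -addn1 PoszD addrK.
Qed.

Lemma dlap_cdf_series (k : int) : dlap_series k = (dlap_cdf e0 k)%:E.
Proof. by rewrite /dlap_cdf dlap_series_closed. Qed.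

Lemma dlap_cdf_ge0 (k : int) : 0 <= dlap_cdf e0 k.
Proof.
by rewrite -lee_fin -dlap_cdf_series nneseries_ge0 // => j _; rewrite lee_fin dlap_pmf_ge0.
Qed.

Lemma dlap_cdf_compl (k : int) : 1 - dlap_cdf e0 k = dlap_cdf e0 (- k - 1).
Proof.
rewrite /dlap_cdf !dlap_series_closed /= /dlap_cdf_closed.
case: (leP 0 k) => k_ge0.
  rewrite ifF; last by apply/negbTE; rewrite -ltNge; lia.
  by rewrite opprB addrC subrK intrB intrN; congr (expR _ / _); ring.
rewrite ifT; last by lia.
by rewrite intrB intrN; congr (1 - expR _ / _); ring.
Qed.

Lemma dlap_cdf_le_succ (k : int) : dlap_cdf e0 k <= dlap_cdf e0 (k + 1).
Proof.
have := dlap_series_recl (k + 1); rewrite addrK !dlap_cdf_series -EFinD => -[->].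
by rewrite lerDr dlap_pmf_ge0.
Qed.

Lemma dlap_cdf_succ_le (k : int) : dlap_cdf e0 (k + 1) <= expR e0 * dlap_cdf e0 k.
Proof.
rewrite -lee_fin EFinM -!dlap_cdf_series -nneseriesZl; last first.
  by move=> j _; rewrite lee_fin dlap_pmf_ge0.
apply: lee_nneseries => [j _ _|j _]; first by rewrite lee_fin dlap_pmf_ge0.
by rewrite -EFinM lee_fin addrAC dlap_pmfS_le.
Qed.

Lemma dlap_cdf_ratio (k k' : int) : `|k - k'| <= 1 ->
  dlap_cdf e0 k <= expR e0 * dlap_cdf e0 k'.
Proof.
have expR_ge1 : 1 <= expR e0 by rewrite -expR0 ler_expR ltW.
move=> kk'; have [->|[->|->]] : k = k' \/ k = k' + 1 \/ k' = k + 1.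
- by move: kk'; rewrite ler_norml; lia.
- by rewrite ler_peMl // dlap_cdf_ge0.
- exact: dlap_cdf_succ_le.
- by rewrite (le_trans (dlap_cdf_le_succ k)) // ler_peMl // dlap_cdf_ge0.
Qed.

Lemma dlap_cdf_compl_ratio (k k' : int) : `|k - k'| <= 1 ->
  1 - dlap_cdf e0 k <= expR e0 * (1 - dlap_cdf e0 k').
Proof.
move=> kk'; rewrite !dlap_cdf_compl dlap_cdf_ratio //.
by rewrite (_ : - k - 1 - (- k' - 1) = - (k - k')) ?normrN //; ring.
Qed.

End DiscreteLaplace.

Lemma card_sandwich_le1 (T : finType) (X Y Z : {set T}) :
  X \subset Y -> Y \subset X :|: Z -> (#|Z| <= 1)%N -> (#|X| <= #|Y| <= #|X| + 1)%N.
Proof.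
move=> XY YXZ Z_le1; rewrite subset_leq_card //=.
rewrite (leq_trans (subset_leq_card YXZ)) // (leq_trans (leq_card_setU _ _)) //.
by rewrite leq_add2l.
Qed.

Lemma set2_inj (T : finType) (v u u' : T) : [set u; v] = [set u'; v] -> u = u'.
Proof.
move=> uvE; have /set2P[] // : u \in [set u'; v] by rewrite -uvE set21.
move=> uv; have /set2P[] // : u' \in [set u; v] by rewrite uvE set21.
by rewrite uv.
Qed.

Section EdgeInsertion.
Variables (n : nat) (E : graph n) (e : {set 'I_n}).

Lemma deg_setU1 v : (deg E v <= deg (e |: E) v <= deg E v + 1)%N.
Proof.
apply: (@card_sandwich_le1 _ _ _ [set e]); last by rewrite cards1.
  by apply/fintype.subsetP => f; rewrite !inE => /andP[-> ->]; rewrite orbT.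
by apply/fintype.subsetP => f; rewrite !inE => /andP[/orP[-> | ->] ->]; rewrite ?orbT.
Qed.

Lemma deg_setU1_notin v : v \notin e -> deg (e |: E) v = deg E v.
Proof.
move=> ve; apply: eq_card => f; rewrite !inE.
by case: eqP => //= ->; rewrite (negbTE ve) andbF.
Qed.

Lemma ell_setU1 c v : (ell E c v <= ell (e |: E) c v <= ell E c v + 1)%N.
Proof.
apply: (@card_sandwich_le1 _ _ _ [set u | [set u; v] == e]).
- by apply/fintype.subsetP => u; rewrite !inE; case: (_ == e) => //= /andP[_ ->].
- by apply/fintype.subsetP => u; rewrite !inE; case: (_ == e); rewrite /= ?orbT ?orbF.
apply/card_le1_eqP => u u'; rewrite !inE => /eqP uvE /eqP u'vE.
by apply: (@set2_inj _ v); rewrite uvE u'vE.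
Qed.

Lemma ell_setU1_notin c v : v \notin e -> ell (e |: E) c v = ell E c v.
Proof.
move=> ve; apply: eq_card => u; rewrite !inE.
by case: eqP => //= uvE; move: ve; rewrite -uvE set22.
Qed.

Lemma cutval_induced_setU1 C s :
  (cutval (induced E C) s <= cutval (induced (e |: E) C) s <= cutval (induced E C) s + 1)%N.
Proof.
apply: (@card_sandwich_le1 _ _ _ [set e]); last by rewrite cards1.
  by apply/fintype.subsetP => f; rewrite !inE => /andP[/andP[-> ->] ->]; rewrite orbT.
apply/fintype.subsetP => f; rewrite !inE => /andP[/andP[/orP[-> | ->] ->] ->] //.
by rewrite orbT.
Qed.

End EdgeInsertion.

Definition keep_threshold (R : realType) n (E : graph n) (c : cut n) v : int :=
  Num.ceil (((deg E v)%:R - 1) / 2 : R) - (ell E c v)%:Z.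

Lemma keep_threshold_setU1 (R : realType) n (E : graph n) (e : {set 'I_n}) c v :
  `|keep_threshold R (e |: E) c v - keep_threshold R E c v| <= 1.
Proof.
have /andP[d_le d_ge] := deg_setU1 E e v.
move: d_le d_ge; rewrite -!(ler_nat R) natrD => d_le d_ge.
have := @ceil_between R (((deg E v)%:R - 1) / 2)
  (((deg (e |: E) v)%:R - 1) / 2) ltac:(lra) ltac:(lra).
move: (ell_setU1 E e c v); rewrite /keep_threshold.
move: (Num.ceil _) (Num.ceil _) (ell E c v) (ell (e |: E) c v) => x y l l'.
case/andP=> l_le l_ge /andP[c_le c_ge].
by rewrite ler_norml; apply/andP; split; lia.
Qed.

Lemma keep_threshold_setU1_notin (R : realType) n (E : graph n) (e : {set 'I_n}) c v :
  v \notin e -> keep_threshold R (e |: E) c v = keep_threshold R E c v.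
Proof. by move=> ve; rewrite /keep_threshold deg_setU1_notin // ell_setU1_notin. Qed.

Definition differ_in_edge n (e : {set 'I_n}) (E E' : graph n) :=
  E' = e |: E \/ E = e |: E'.

Lemma differ_in_edge_sym n (e : {set 'I_n}) (E E' : graph n) :
  differ_in_edge e E E' -> differ_in_edge e E' E.
Proof. by case; [right | left]. Qed.

Lemma neighboring_differ_in_edge n (E E' : graph n) : neighboring E E' ->
  exists2 e : {set 'I_n}, #|e| = 2 & differ_in_edge e E E'.
Proof.
case=> e [e2 sdE]; exists e => //.
have memE f : (f \in E) = (f \in E') (+) (f == e).
  have := congr1 (fun X : graph n => f \in X) sdE; rewrite !inE => <-.
  by case: (f \in E); case: (f \in E').
case eE': (e \in E'); [left | right]; apply/finset.setP => f; rewrite in_setU1 memE;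
  by case: eqVneq => [->|] //=; rewrite ?eE' ?addbF.
Qed.

Section DifferInEdge.
Variables (R : realType) (n : nat) (E E' : graph n) (e : {set 'I_n}).
Hypothesis EE' : differ_in_edge e E E'.

Lemma deg_dist_le1 v : `|(deg E v)%:R - (deg E' v)%:R : R| <= 1.
Proof.
have deg_setU1_dist (A : graph n) : `|(deg (e |: A) v)%:R - (deg A v)%:R : R| <= 1.
  have /andP[] := deg_setU1 A e v; rewrite -!(ler_nat R) natrD ler_norml.
  by move=> ? ?; apply/andP; split; lra.
by case: EE' => ->; [rewrite distrC|]; apply: deg_setU1_dist.
Qed.

Lemma deg_notin v : v \notin e -> deg E v = deg E' v.
Proof. by case: EE' => -> ve; rewrite deg_setU1_notin. Qed.

Lemma keep_threshold_dist_le1 c v :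
  `|keep_threshold R E c v - keep_threshold R E' c v| <= 1.
Proof. by case: EE' => ->; [rewrite distrC|]; apply: keep_threshold_setU1. Qed.

Lemma keep_threshold_notin c v : v \notin e ->
  keep_threshold R E c v = keep_threshold R E' c v.
Proof. by case: EE' => -> ve; rewrite keep_threshold_setU1_notin. Qed.

Lemma cutval_induced_le C s :
  (cutval (induced E C) s <= cutval (induced E' C) s + 1)%N.
Proof.
case: EE' => ->.
  have /andP[le_cut _] := cutval_induced_setU1 E e C s.
  by rewrite (leq_trans le_cut) ?leq_addr.
by have /andP[] := cutval_induced_setU1 E' e C s.
Qed.

End DifferInEdge.

Section ExponentialBranch.
Variables (R : realType) (n : nat) (eps : R).
Hypothesis eps_gt0 : 0 < eps.
Implicit Types (E : graph n) (e C : {set 'I_n}) (s : cut n).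

Let b_gt0 : 0 < 3 / eps. Proof. by rewrite divr_gt0. Qed.

Lemma in_probE E v : in_prob eps E v = lap_tail (3 / eps) (thr eps - (deg E v)%:R).
Proof. by []. Qed.

Lemma in_prob_ge0 E v : 0 <= in_prob eps E v.
Proof. exact: lap_tail_ge0. Qed.

Lemma in_prob_le1 E v : in_prob eps E v <= 1.
Proof. by rewrite -subr_ge0 in_probE lap_tail_compl // lap_tail_ge0. Qed.

Lemma setC_prob_ge0 E C : 0 <= setC_prob eps E C.
Proof.
apply: prodr_ge0 => v _.
by case: ifP => _; rewrite ?subr_ge0 ?in_prob_ge0 ?in_prob_le1.
Qed.

Lemma setC_prob_ratio E E' e C : differ_in_edge e E E' ->
  setC_prob eps E C <= expR (eps / 3) ^+ #|e| * setC_prob eps E' C.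
Proof.
move=> EE'; apply: ler_prod_except => [v | v ve | v _].
- by case: ifP => _; rewrite ?subr_ge0 ?in_prob_ge0 ?in_prob_le1.
- by rewrite !in_probE (deg_notin EE').
have thr_dist : `|(thr eps - (deg E v)%:R) - (thr eps - (deg E' v)%:R)| <= 1.
  rewrite (_ : _ - _ = (deg E' v)%:R - (deg E v)%:R); last by ring.
  by rewrite distrC (deg_dist_le1 _ EE').
rewrite -[eps / 3]invf_div; case: ifP => _; rewrite !in_probE.
  exact: lap_tail_ratio.
exact: lap_tail_compl_ratio.
Qed.

Lemma em_weight_ratio E E' e C s : differ_in_edge e E E' ->
  em_weight eps E C s <= expR (eps / 6) * em_weight eps E' C s.
Proof.
move=> EE'; rewrite /em_weight -expRD ler_expR.
have := cutval_induced_le EE' C s; rewrite -(ler_nat R) natrD => cut_le.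
have := ler_wpM2l (ltW eps_gt0) cut_le; lra.
Qed.

Lemma em_norm_ratio E E' e C : differ_in_edge e E E' ->
  em_norm eps E C <= expR (eps / 6) * em_norm eps E' C.
Proof.
move=> EE'; rewrite /em_norm mulr_sumr; apply: ler_sum => t _.
exact: em_weight_ratio EE'.
Qed.

Lemma em_norm_gt0 E C : 0 < em_norm eps E C.
Proof.
rewrite /em_norm (bigD1 [ffun=> false]) /=; last first.
  by apply/forallP => v; rewrite ffunE implybT.
by rewrite ltr_pwDl ?expR_gt0 // sumr_ge0 // => t _; rewrite expR_ge0.
Qed.

Lemma S1_cond_pmf_ge0 E C s : 0 <= S1_cond_pmf eps E C s.
Proof.
rewrite /S1_cond_pmf mulr_ge0 ?invr_ge0 ?exprn_ge0 //.
by rewrite divr_ge0 ?expR_ge0 // ltW ?em_norm_gt0.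
Qed.

Lemma S1_cond_pmf_ratio E E' e C s : differ_in_edge e E E' ->
  S1_cond_pmf eps E C s <= expR (eps / 3) * S1_cond_pmf eps E' C s.
Proof.
move=> EE'; rewrite /S1_cond_pmf mulrA ler_wpM2r ?invr_ge0 ?exprn_ge0 //.
have -> : expR (eps / 3) = expR (eps / 6) ^+ 2 by rewrite -expRM_natr; congr expR; field.
apply: ler_ratio; rewrite ?em_norm_gt0 ?expR_ge0 ?expR_gt0 //.
  exact: em_weight_ratio EE'.
exact: em_norm_ratio (differ_in_edge_sym EE').
Qed.

Lemma S1_pmf_ratio E E' e s : #|e| = 2 -> differ_in_edge e E E' ->
  \sum_C setC_prob eps E C * S1_cond_pmf eps E C s <=
  expR eps * \sum_C setC_prob eps E' C * S1_cond_pmf eps E' C s.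
Proof.
move=> e2 EE'; rewrite mulr_sumr; apply: ler_sum => C _.
have -> : expR eps = expR (eps / 3) ^+ #|e| * expR (eps / 3).
  by rewrite e2 -expRM_natr -expRD; congr expR; field.
rewrite mulrACA ler_pM ?setC_prob_ge0 ?S1_cond_pmf_ge0 //.
  exact: setC_prob_ratio EE'.
exact: S1_cond_pmf_ratio EE'.
Qed.

End ExponentialBranch.

Section AlgorithmA.
Variables (R : realType) (n : nat) (eps' : R).
Hypothesis eps'_gt0 : 0 < eps'.
Implicit Types (E : graph n) (e : {set 'I_n}) (c s : cut n).

Let e0_gt0 : 0 < eps' / 2. Proof. by rewrite divr_gt0. Qed.

Lemma keep_probE E c v :
  keep_prob eps' E c v = dlap_cdf (eps' / 2) (keep_threshold R E c v).
Proof. by []. Qed.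

Lemma keep_prob_ge0 E c v : 0 <= keep_prob eps' E c v.
Proof. exact: dlap_cdf_ge0. Qed.

Lemma keep_prob_le1 E c v : keep_prob eps' E c v <= 1.
Proof. by rewrite -subr_ge0 keep_probE dlap_cdf_compl // dlap_cdf_ge0. Qed.

Lemma algA_factor_ge0 E c1 c2 s v :
  0 <= keep_prob eps' E c1 v * (c1 v == s v)%:R
       + (1 - keep_prob eps' E c1 v) * (c2 v == s v)%:R.
Proof. by rewrite addr_ge0 // mulr_ge0 ?subr_ge0 ?keep_prob_ge0 ?keep_prob_le1. Qed.

Lemma algA_pmf_ge0 E s : 0 <= algA_pmf eps' E s.
Proof.
apply: sumr_ge0 => c1 _; apply: sumr_ge0 => c2 _.
rewrite mulr_ge0 ?mulr_ge0 ?invr_ge0 ?exprn_ge0 //.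
by apply: prodr_ge0 => v _; apply: algA_factor_ge0.
Qed.

Lemma algA_pmf_ratio E E' e s : #|e| = 2 -> differ_in_edge e E E' ->
  algA_pmf eps' E s <= expR eps' * algA_pmf eps' E' s.
Proof.
move=> e2 EE'; rewrite /algA_pmf mulr_sumr; apply: ler_sum => c1 _.
rewrite mulr_sumr; apply: ler_sum => c2 _.
rewrite mulrCA ler_wpM2l ?mulr_ge0 ?invr_ge0 ?exprn_ge0 //.
have -> : expR eps' = expR (eps' / 2) ^+ #|e| by rewrite e2 -expRM_natr divfK ?pnatr_eq0.
apply: ler_prod_except => [v | v ve | v _]; first exact: algA_factor_ge0.
  by rewrite !keep_probE (keep_threshold_notin _ EE').
apply: ler_mixture => //; rewrite !keep_probE.
  exact/dlap_cdf_ratio/(keep_threshold_dist_le1 _ EE').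
exact/dlap_cdf_compl_ratio/(keep_threshold_dist_le1 _ EE').
Qed.

End AlgorithmA.

Theorem theorem5p6 (R : realType) (n : nat) (eps : R) (heps : 0 < eps) :
  edge_DP eps (fun E T => @alg_prob R n eps E T).
Proof.
move=> E E' _ _ /neighboring_differ_in_edge[e e2 EE'] T.
rewrite /alg_prob mulr_sumr; apply: ler_sum => s _.
rewrite /alg_pmf mulrDr !(mulrCA (expR eps)) lerD // ler_wpM2l //.
  exact (S1_pmf_ratio heps s e2 EE').
have eps3_gt0 : 0 < eps / 3 by rewrite divr_gt0.
rewrite (le_trans (algA_pmf_ratio eps3_gt0 s e2 EE')) // ler_wpM2r ?algA_pmf_ge0 //.
by rewrite ler_expR; lra.
Qed.
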